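(* Let $\mathcal{P}=(\{\mathcal{E}_k:k\in K\},\{M_0,M_1\})$ be a concurrent quantum program with $K=\{1,\dots,m\}$ on a Hilbert space $\mathcal{H}$ of finite dimension $d$, with initial density operator $\rho_0$. Let $\mathcal{G}=\sum_{i=0}^{d-1}\big(\sum_{k=1}^m\mathcal{F}_k\big)^i$ and, for each permutation $p=p_1p_2\cdots p_m\in P_K$, let $\mathcal{F}_p'=\mathcal{F}_{p_m}\circ\mathcal{G}\circ\mathcal{F}_{p_{m-1}}\circ\cdots\circ\mathcal{F}_{p_2}\circ\mathcal{G}\circ\mathcal{F}_{p_1}$. Let $M$ be the matrix representation of $\sum_{p\in P_K}\mathcal{F}'_p$. Then $\mathcal{P}$ with input $\rho_0$ terminates in the fair schedule $F$ if and only if $M^d(\rho_0\otimes I)|\Phi\rangle=0$, equivalently iff $\big(\sum_{p\in P_K}\mathcal{F}'_p\big)^d(\rho_0)=0$.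
   Context: $\mathcal{H}$ is a complex Hilbert space of finite dimension $d\ge1$ with orthonormal basis $\{|j\rangle\}$, and $|\Phi\rangle=\sum_j|j\rangle|j\rangle$. A super-operator is a completely positive trace-non-increasing linear map on operators on $\mathcal{H}$, with Kraus form $\mathcal{E}(\rho)=\sum_iE_i\rho E_i^\dagger$; its matrix representation is $\sum_iE_i\otimes E_i^*$ ($E^*$ entrywise complex conjugate), and for any CP linear map written in Kraus form the same definition applies. A concurrent quantum program is $\mathcal{P}=(\{\mathcal{E}_k:k\in K\},\{M_0,M_1\})$ with trace-preserving super-operators $\mathcal{E}_k$ and $M_0^\dagger M_0+M_1^\dagger M_1=I$. $\mathcal{F}_k(\rho)=\mathcal{E}_k(M_1\rho M_1^\dagger)$; for a finite string $f=s_1\cdots s_n$, $\mathcal{F}_f=\mathcal{F}_{s_n}\circ\cdots\circ\mathcal{F}_{s_1}$; powers denote iterated composition, the $0$th power the identity. For $s\in K^\omega$, $s[n]$ is its length-$n$ prefix. $\mathcal{P}$ with input $\rho_0$ terminates in a schedule $A\subseteq K^\omega$ if for every $s\in A$ there is $n\ge1$ with $\mathcal{F}_{s[n]}(\rho_0)=0$. $F$ is the set of infinite paths in which every $k\in K$ occurs infinitely often. $P_K$ is the set of permutations of $K$ as strings of length $m$. *)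

From HB Require Import structures.
From mathcomp Require Import all_boot all_order all_algebra all_fingroup all_field.
Set Implicit Arguments. Unset Strict Implicit. Unset Printing Implicit Defensive.
Import Order.TTheory GRing.Theory Num.Theory.
Local Open Scope ring_scope.

Definition cconj m n (A : 'M[algC]_(m, n)) : 'M[algC]_(m, n) := map_mx Num.conj A.
Definition adj m n (A : 'M[algC]_(m, n)) : 'M[algC]_(n, m) := (cconj A)^T.

Definition psd d (A : 'M[algC]_d) : Prop :=
  adj A = A /\ forall x : 'cV[algC]_d, 0 <= (adj x *m A *m x) 0 0.
Definition density d (rho : 'M[algC]_d) : Prop := psd rho /\ \tr rho = 1.

(* super-operators (CP maps) given in Kraus form: a list of Kraus operators *)
Definition superop d := seq 'M[algC]_d.
Definition so_app d (L : superop d) (rho : 'M[algC]_d) : 'M[algC]_d :=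
  \sum_(E <- L) E *m rho *m adj E.
(* so_comp f g = f o g *)
Definition so_comp d (f g : superop d) : superop d := [seq F *m G | F <- f, G <- g].
Definition so_id d : superop d := [:: 1%:M].
Definition so_pow d (f : superop d) (n : nat) : superop d := iter n (so_comp f) (so_id d).
Definition so_sum d (fs : seq (superop d)) : superop d := flatten fs.

Definition trace_preserving d (L : superop d) : Prop :=
  \sum_(E <- L) adj E *m E = 1%:M.

(* Kronecker product, indices of 'I_(m*n) identified with 'I_m * 'I_n via mxvec_index *)
Definition pidx m n (k : 'I_(m * n)) : 'I_m * 'I_n := enum_val (cast_ord (esym (mxvec_cast m n)) k).
Definition kron m1 n1 m2 n2 (A : 'M[algC]_(m1, n1)) (B : 'M[algC]_(m2, n2))
  : 'M[algC]_(m1 * m2, n1 * n2) :=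
  \matrix_(k, l) (A (pidx k).1 (pidx l).1 * B (pidx k).2 (pidx l).2).
(* |Phi> = sum_j |j>|j> *)
Definition Phi d : 'cV[algC]_(d * d) :=
  \col_k (if (pidx k).1 == (pidx k).2 then 1 else 0).
Definition matrep d (L : superop d) : 'M[algC]_(d * d) :=
  \sum_(E <- L) kron E (cconj E).
Definition mxpow n (A : 'M[algC]_n) (k : nat) : 'M[algC]_n := iter k (mulmx A) 1%:M.

(* the concurrent program: Es k = Kraus list of E_k, measurement {M0, M1} *)
Definition Fk d m (Es : 'I_m -> superop d) (M1 : 'M[algC]_d) (k : 'I_m) : superop d :=
  [seq E *m M1 | E <- Es k].   (* F_k(rho) = E_k(M1 rho M1^dag) *)

Definition Gop d m (Es : 'I_m -> superop d) M1 : superop d :=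
  so_sum [seq so_pow (so_sum [seq Fk Es M1 k | k <- enum 'I_m]) i | i <- iota 0 d].

(* F'_{p1...pn} = F_{pn} o G o ... o G o F_{p1} *)
Fixpoint Fprime_seq d m (Es : 'I_m -> superop d) M1 (s : seq 'I_m) : superop d :=
  match s with
  | [::] => so_id d
  | [:: k] => Fk Es M1 k
  | k :: s' => so_comp (Fprime_seq Es M1 s') (so_comp (Gop Es M1) (Fk Es M1 k))
  end.
Definition Fprime d m (Es : 'I_m -> superop d) M1 (p : {perm 'I_m}) : superop d :=
  Fprime_seq Es M1 [seq p i | i <- enum 'I_m].
Definition sumFprime d m (Es : 'I_m -> superop d) M1 : superop d :=
  so_sum [seq Fprime Es M1 p | p <- enum {perm 'I_m}].

(* F_{s[n]}(rho) = F_{s_{n-1}}( ... F_{s_0}(rho)) ; infinite paths s : nat -> K *)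
Fixpoint path_app d m (Es : 'I_m -> superop d) M1 (s : nat -> 'I_m) (n : nat)
  (rho : 'M[algC]_d) : 'M[algC]_d :=
  match n with
  | 0 => rho
  | n'.+1 => so_app (Fk Es M1 (s n')) (path_app Es M1 s n' rho)
  end.

Definition terminates_in d m (Es : 'I_m -> superop d) M1 (rho0 : 'M[algC]_d)
  (A : (nat -> 'I_m) -> Prop) : Prop :=
  forall s, A s -> exists n, (1 <= n)%N /\ path_app Es M1 s n rho0 = 0.

Definition fair m (s : nat -> 'I_m) : Prop :=
  forall k : 'I_m, forall N : nat, exists n, (N <= n)%N /\ s n = k.

From HB Require Import structures.
From mathcomp Require Import all_boot all_order all_algebra all_fingroup all_field.
From mathcomp Require Import zify ring.
Import Order.TTheory GRing.Theory Num.Theory.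
Local Open Scope ring_scope.
Set Implicit Arguments. Unset Strict Implicit. Unset Printing Implicit Defensive.

(* The proof works with supports instead of density operators.  A Kraus list L acts on
   row spaces by  X |-> span {X E^T | E in L}  ([kspan]); for positive semidefinite rho,
   L(rho) = 0 iff kspan L rho^T = 0, and composition and powers of super-operators become
   composition and iteration of [kspan]. *)

Section SeqSums.
Variables (F : fieldType) (I : eqType) (r : seq I) (n : nat).

Lemma seq_sumsmx_subP m (A_ : I -> 'M[F]_n) (B : 'M_(m, n)) :
  reflect (forall i, i \in r -> (A_ i <= B)%MS) (\sum_(i <- r) A_ i <= B)%MS.
Proof.
apply: (iffP idP) => [sAB i ri | sAB].
  by apply: submx_trans sAB; rewrite (big_rem i) //= addsmxSl.
rewrite big_seq; elim/big_rec: _ => [|i B' ri sB'B]; first exact: sub0mx.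
by rewrite addsmx_sub sAB.
Qed.

Lemma seq_sumsmx_sup i0 m (A : 'M[F]_(m, n)) (B_ : I -> 'M_n) :
  i0 \in r -> (A <= B_ i0)%MS -> (A <= \sum_(i <- r) B_ i)%MS.
Proof.
by move=> ri0 sAB; apply: submx_trans sAB _; rewrite (big_rem i0) //= addsmxSl.
Qed.

End SeqSums.

Section MonotoneChains.
Variables (F : fieldType) (n : nat).
Implicit Types (U W X Y : 'M[F]_n).

Lemma ascending_chain_stalls (U : nat -> 'M[F]_n) :
  (forall j, U j <= U j.+1)%MS -> exists2 j, (j <= n)%N & (U j.+1 <= U j)%MS.
Proof.
move=> incU; have [/existsP [j stall]|no_stall] :=
  boolP [exists j : 'I_n.+1, U j.+1 <= U j]%MS; first by exists j; first rewrite -ltnS.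
have grow j : (j <= n.+1)%N -> (j <= \rank (U j))%N.
  elim: j => // j IHj ltjn; apply: leq_ltn_trans (IHj (ltnW ltjn)) (rank_ltmx _).
  rewrite ltmxE incU /=; apply: contra no_stall => stall.
  by apply/existsP; exists (Ordinal ltjn).
by have := leq_trans (grow _ (leqnn _)) (rank_leq_col _); rewrite ltnn.
Qed.

Lemma descending_chain_stalls (W : nat -> 'M[F]_n) :
  (forall j, W j.+1 <= W j)%MS -> exists2 j, (j <= n)%N & (W j <= W j.+1)%MS.
Proof.
move=> decW; have [/existsP [j stall]|no_stall] :=
  boolP [exists j : 'I_n.+1, W j <= W j.+1]%MS; first by exists j; first rewrite -ltnS.
have shrink j : (j <= n.+1)%N -> (\rank (W j) + j <= n)%N.
  elim: j => [|j IHj ltjn]; first by rewrite addn0 rank_leq_col.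
  have: (\rank (W j.+1) < \rank (W j))%N.
    apply: rank_ltmx; rewrite ltmxE decW /=; apply: contra no_stall => stall.
    by apply/existsP; exists (Ordinal ltjn).
  by have := IHj (ltnW ltjn); lia.
by have := shrink _ (leqnn _); lia.
Qed.

Variable phi : 'M[F]_n -> 'M[F]_n.
Hypothesis phi_mono : forall X Y, (X <= Y)%MS -> (phi X <= phi Y)%MS.
Hypothesis phi_adds : forall X Y, (phi (X + Y)%MS <= phi X + phi Y)%MS.
Hypothesis phi0 : (phi 0 <= (0 : 'M_n))%MS.

Lemma phi_sums (J : Type) (r : seq J) (P : pred J) (A : J -> 'M[F]_n) :
  (phi (\sum_(i <- r | P i) A i)%MS <= \sum_(i <- r | P i) phi (A i))%MS.
Proof.
elim/big_rec2: _ => // i B phiB _ sB; apply: submx_trans (phi_adds _ _) _.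
exact: addsmxS.
Qed.

Lemma iter_phi_mono k X Y : (X <= Y)%MS -> (iter k phi X <= iter k phi Y)%MS.
Proof. by move=> sXY; elim: k => //= k; apply: phi_mono. Qed.

Lemma iter_phi_sums k (J : Type) (r : seq J) (P : pred J) (A : J -> 'M[F]_n) :
  (iter k phi (\sum_(i <- r | P i) A i)%MS <= \sum_(i <- r | P i) iter k phi (A i))%MS.
Proof.
elim: k => [|k IHk] /=; first exact: submx_refl.
exact: submx_trans (phi_mono IHk) (phi_sums _ _ _).
Qed.

Lemma iter_phi0 k : (iter k phi 0 <= (0 : 'M_n))%MS.
Proof. by elim: k => //= k IHk; apply: submx_trans (phi_mono IHk) phi0. Qed.

(* Every iterate of X lies in the span of the first n iterates of X: the partial spans
   stall at some j <= n, and the j-th one is then phi-invariant. *)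
Lemma iter_sub_first_iterates X k :
  (iter k phi X <= \sum_(i < n) iter i phi X)%MS.
Proof.
pose U j := (\sum_(i < j) iter i phi X)%MS.
have [j ljn stall] : exists2 j, (j <= n)%N & (U j.+1 <= U j)%MS.
  by apply: ascending_chain_stalls => j; rewrite /U big_ord_recr addsmxSl.
have phiU : (phi (U j) <= U j)%MS.
  apply: submx_trans (phi_sums _ _ _) (submx_trans _ stall).
  apply/sumsmx_subP => i _; rewrite -iterS.
  exact: (sumsmx_sup (lift ord0 i)).
have XU : (X <= U j)%MS by apply: submx_trans stall; apply: (sumsmx_sup ord0).
apply: submx_trans (_ : U j <= U n)%MS.
  by elim: k => //= k IHk; apply: submx_trans (phi_mono IHk) phiU.
by apply/sumsmx_subP => i _; apply: (sumsmx_sup (widen_ord ljn i)).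
Qed.

(* If some iterate of X vanishes, then already the n-th one does: the windows of k + 1
   consecutive iterates decrease, and once they stall they must be 0. *)
Lemma iter_nilpotent X k : iter k phi X = 0 -> iter n phi X = 0.
Proof.
move=> Xk0; apply/eqP; rewrite -submx0.
have {Xk0} vanish i : (iter (i + k)%N phi X <= (0 : 'M_n))%MS.
  by rewrite iterD Xk0 iter_phi0.
case: k vanish => [|k] vanish; first by have := vanish n; rewrite addn0.
pose W j := (\sum_(i < k.+1) iter (j + i)%N phi X)%MS.
have phiW j : (phi (W j) <= W j.+1)%MS.
  apply: submx_trans (phi_sums _ _ _) _; apply/sumsmx_subP => i _.
  by rewrite -iterS -addSn; apply: (sumsmx_sup i).
have W_phi j : (W j.+1 <= phi (W j))%MS.
  by apply/sumsmx_subP => i _; rewrite addSn iterS; apply/phi_mono/(sumsmx_sup i).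
have decW j : (W j.+1 <= W j)%MS.
  apply/sumsmx_subP => i _; rewrite addSn -addnS.
  case: (ltnP i.+1 k.+1) => [ltik | leki]; first exact: (sumsmx_sup (Ordinal ltik)).
  have -> : (j + i.+1 = j + (i.+1 - k.+1) + k.+1)%N by lia.
  exact: submx_trans (vanish _) (sub0mx _ _).
have [j ljn stall] := descending_chain_stalls decW.
(* a stalled window is phi-expanding, hence reaches the vanishing iterates *)
have Wj0 : (W j <= (0 : 'M_n))%MS.
  have grow t : (W j <= W (j + t)%N)%MS.
    elim: t => [|t IHt]; first by rewrite addn0.
    apply: submx_trans (submx_trans stall (W_phi j)) _; rewrite addnS.
    exact: submx_trans (phi_mono IHt) (phiW _).
  apply: submx_trans (grow k.+1) _; apply/sumsmx_subP => i _.
  by rewrite addnAC; apply: vanish.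
have shrink t : (W (j + t)%N <= W j)%MS.
  elim: t => [|t IHt]; first by rewrite addn0.
  by rewrite addnS; apply: submx_trans (decW _) IHt.
apply: submx_trans (submx_trans (shrink (n - j)%N) Wj0).
by rewrite subnKC // (sumsmx_sup ord0) ?addn0.
Qed.

End MonotoneChains.

Section KrausSpan.
Variables (F : fieldType) (n : nat).
Implicit Types (L f g : seq 'M[F]_n) (X Y : 'M[F]_n).

(* the support of L(rho) when X is the support of rho^T: the span of the X E^T *)
Definition kspan L X : 'M[F]_n := (\sum_(E <- L) X *m E^T)%MS.

Lemma kspan_subP L X m (Z : 'M[F]_(m, n)) :
  reflect (forall E, E \in L -> (X *m E^T <= Z)%MS) (kspan L X <= Z)%MS.
Proof. exact: seq_sumsmx_subP. Qed.

Lemma kspan_sup L X E : E \in L -> (X *m E^T <= kspan L X)%MS.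
Proof. by move=> EL; apply: (seq_sumsmx_sup EL). Qed.

Lemma kspan_mono L X Y : (X <= Y)%MS -> (kspan L X <= kspan L Y)%MS.
Proof.
by move=> sXY; apply/kspan_subP => E EL; apply: submx_trans (kspan_sup _ EL); apply: submxMr.
Qed.

Lemma kspan_adds L X Y : (kspan L (X + Y)%MS <= kspan L X + kspan L Y)%MS.
Proof.
by apply/kspan_subP => E EL; rewrite addsmxMr addsmxS ?kspan_sup.
Qed.

Lemma kspan0 L : (kspan L 0 <= (0 : 'M_n))%MS.
Proof. by apply/kspan_subP => E _; rewrite mul0mx. Qed.

Lemma kspan_subset L1 L2 X : {subset L1 <= L2} -> (kspan L1 X <= kspan L2 X)%MS.
Proof. by move=> sL; apply/kspan_subP => E /sL; apply: kspan_sup. Qed.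

Lemma kspan_eqmx L X Y : (X :=: Y)%MS -> (kspan L X :=: kspan L Y)%MS.
Proof. by move=> eqXY; apply/eqmxP; rewrite !kspan_mono ?eqXY. Qed.

Lemma kspan_mulmx L X C m (Z : 'M[F]_(m, n)) :
  (forall E, E \in L -> (X *m E^T *m C <= Z)%MS) -> (kspan L X *m C <= Z)%MS.
Proof.
rewrite /kspan; elim: L => [|E L IHL] sLZ; first by rewrite big_nil mul0mx sub0mx.
rewrite big_cons addsmxMr addsmx_sub sLZ ?mem_head //=.
by apply: IHL => E' E'L; apply: sLZ; rewrite in_cons E'L orbT.
Qed.

Lemma kspan_comp f g X :
  (kspan [seq A *m B | A <- f, B <- g] X :=: kspan f (kspan g X))%MS.
Proof.
apply/eqmxP/andP; split.
  apply/kspan_subP => _ /allpairsP [[A B] [/= Af Bg ->]].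
  rewrite trmx_mul mulmxA; apply: submx_trans (kspan_sup _ Af).
  by apply: submxMr; apply: kspan_sup.
apply/kspan_subP => A Af; apply: kspan_mulmx => B Bg.
by rewrite -mulmxA -trmx_mul; apply: kspan_sup; apply/allpairsP; exists (A, B).
Qed.

Lemma kspan1 X : (kspan [:: 1%:M] X :=: X)%MS.
Proof. by rewrite /kspan big_seq1 trmx1 mulmx1. Qed.

Lemma kspan_iter_mono L k X Y : (X <= Y)%MS -> (iter k (kspan L) X <= iter k (kspan L) Y)%MS.
Proof. exact: (iter_phi_mono (@kspan_mono L)). Qed.

Lemma kspan_iter0 L k : (iter k (kspan L) 0 <= (0 : 'M_n))%MS.
Proof. exact: (iter_phi0 (@kspan_mono L) (kspan0 L)). Qed.

Lemma kspan_iter_sums L k (J : Type) (r : seq J) (P : pred J) (A : J -> 'M[F]_n) :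
  (iter k (kspan L) (\sum_(i <- r | P i) A i)%MS <= \sum_(i <- r | P i) iter k (kspan L) (A i))%MS.
Proof. exact: (iter_phi_sums (@kspan_mono L) (@kspan_adds L) (kspan0 L)). Qed.

Lemma kspan_iter_sub_first_iterates L X k :
  (iter k (kspan L) X <= \sum_(i < n) iter i (kspan L) X)%MS.
Proof. exact: iter_sub_first_iterates (@kspan_mono L) (@kspan_adds L) (kspan0 L) _ _. Qed.

Lemma kspan_iter_nilpotent L X k : iter k (kspan L) X = 0 -> iter n (kspan L) X = 0.
Proof. exact: (iter_nilpotent (@kspan_mono L) (@kspan_adds L) (kspan0 L)). Qed.

End KrausSpan.

Lemma kspan_pow d (L : superop d) k X :
  (kspan (so_pow L k) X :=: iter k (kspan L) X)%MS.
Proof.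
elim: k => [|k IHk]; first exact: kspan1.
apply: eqmx_trans (kspan_comp _ _ _) _.
by rewrite iterS; apply: kspan_eqmx.
Qed.

Lemma adjE m n (A : 'M[algC]_(m, n)) i j : adj A i j = (A j i)^*.
Proof. by rewrite !mxE. Qed.

Lemma adjM m n p (A : 'M[algC]_(m, n)) (B : 'M[algC]_(n, p)) :
  adj (A *m B) = adj B *m adj A.
Proof. by rewrite /adj /cconj map_mxM trmx_mul. Qed.

Lemma adjK m n (A : 'M[algC]_(m, n)) : adj (adj A) = A.
Proof. by apply/matrixP => i j; rewrite !adjE conjCK. Qed.

Lemma adjB m n (A B : 'M[algC]_(m, n)) : adj (A - B) = adj A - adj B.
Proof. by apply/matrixP => i j; rewrite !adjE !mxE rmorphB. Qed.

Lemma adjZ m n a (A : 'M[algC]_(m, n)) : adj (a *: A) = a^* *: adj A.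
Proof. by apply/matrixP => i j; rewrite !adjE !mxE rmorphM. Qed.

Lemma adj1 n : adj (1%:M : 'M[algC]_n) = 1%:M.
Proof. by rewrite /adj /cconj map_mx1 trmx1. Qed.

Lemma so_app_comp n (f g : superop n) X : so_app (so_comp f g) X = so_app f (so_app g X).
Proof.
rewrite /so_app /so_comp big_allpairs_dep; apply: eq_bigr => F _.
rewrite mulmx_sumr mulmx_suml; apply: eq_bigr => G _.
by rewrite adjM !mulmxA.
Qed.

Lemma so_app_id n (X : 'M[algC]_n) : so_app (so_id n) X = X.
Proof. by rewrite /so_app big_seq1 adj1 mulmx1 mul1mx. Qed.

Lemma sqnorm_ge0 n (z : 'cV[algC]_n) : 0 <= (adj z *m z) 0 0.
Proof. by rewrite mxE; apply: sumr_ge0 => i _; rewrite adjE mulrC mul_conjC_ge0. Qed.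

Lemma sqnorm_eq0 n (z : 'cV[algC]_n) : (adj z *m z) 0 0 = 0 -> z = 0.
Proof.
rewrite mxE => /eqP; rewrite psumr_eq0 => [/allP z0|i _]; last first.
  by rewrite adjE mulrC mul_conjC_ge0.
apply/matrixP => i j; rewrite (ord1 j) mxE.
by have := z0 i (mem_index_enum _); rewrite adjE mulrC mul_conjC_eq0 => /eqP.
Qed.

Lemma qform_sub_scale n (A : 'M[algC]_n) (y z : 'cV[algC]_n) t :
  (adj (y - t *: z) *m A *m (y - t *: z)) 0 0 =
    (adj y *m A *m y) 0 0 - t * (adj y *m A *m z) 0 0
    - t^* * (adj z *m A *m y) 0 0 + t^* * t * (adj z *m A *m z) 0 0.
Proof.
rewrite adjB adjZ !(mulmxBl, mulmxBr) -!scalemxAl -!scalemxAr.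
rewrite [adj y *m A *m y]mx11_scalar [adj y *m A *m z]mx11_scalar.
rewrite [adj z *m A *m y]mx11_scalar [adj z *m A *m z]mx11_scalar.
set a := (adj y *m A *m y) 0 0; set b := (adj y *m A *m z) 0 0.
set c := (adj z *m A *m y) 0 0; set e := (adj z *m A *m z) 0 0.
rewrite !mxE /= !mulr1n; ring.
Qed.

Lemma psd_null n (rho : 'M[algC]_n) (y : 'cV[algC]_n) :
  psd rho -> (adj y *m rho *m y) 0 0 = 0 -> rho *m y = 0.
Proof.
move=> [rho_herm rho_pos] yy0; set z := rho *m y.
have adjz : adj z = adj y *m rho by rewrite /z adjM rho_herm.
set a := (adj z *m z) 0 0; set b := (adj z *m rho *m z) 0 0.
have a_ge0 : 0 <= a := sqnorm_ge0 z.
have b_ge0 : 0 <= b := rho_pos z.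
have b1_gt0 : 0 < b + 1 by rewrite ltr_wpDl.
pose t := a / (b + 1).
have t_ge0 : 0 <= t by rewrite divr_ge0 // ltW.
have := rho_pos (y - t *: z); rewrite qform_sub_scale yy0 (geC0_conj t_ge0) -/b.
have -> : (adj y *m rho *m z) 0 0 = a by rewrite /a adjz mulmxA.
have -> : (adj z *m rho *m y) 0 0 = a by rewrite /a mulmxA.
have -> : 0 - t * a - t * a + t * t * b = - (a * a * (b + 2%:R)) / ((b + 1) * (b + 1)).
  by rewrite /t; field; rewrite gt_eqF.
rewrite pmulr_lge0 ?invr_gt0 ?mulr_gt0 // oppr_ge0 => aab_le0.
have : a * a * (b + 2%:R) = 0.
  by apply/eqP; rewrite eq_le aab_le0 !mulr_ge0 // addr_ge0.
move/eqP; rewrite !mulf_eq0 orbb (gt_eqF (ltr_wpDl _ _)) // orbF => /eqP.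
exact: sqnorm_eq0.
Qed.

(* A CP map kills a positive semidefinite rho iff each Kraus operator annihilates rho:
   the terms E rho E^dag of L(rho) are positive semidefinite. *)
Lemma so_app_eq0P n (L : superop n) rho :
  psd rho -> so_app L rho = 0 <-> (forall E, E \in L -> E *m rho = 0).
Proof.
move=> psd_rho; have [rho_herm rho_pos] := psd_rho; split => [L0 E EL | EL0]; last first.
  by rewrite /so_app big_seq big1 // => E EL; rewrite EL0 // mul0mx.
suff rhoEadj0 : rho *m adj E = 0.
  by rewrite -[E]adjK -rho_herm -adjM rhoEadj0; apply/matrixP => i j; rewrite !mxE conjC0.
apply/matrixP => i j; pose x : 'cV[algC]_n := delta_mx j 0.
have: rho *m (adj E *m x) = 0.
  apply: psd_null => //; apply/eqP.
  have := congr1 (fun M => (adj x *m M *m x) 0 0) L0.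
  rewrite /so_app mulmx_sumr mulmx_suml summxE mulmx0 mul0mx mxE => /eqP.
  rewrite psumr_eq0 => [/allP/(_ E EL)|F _]; last first.
    by have := rho_pos (adj F *m x); rewrite adjM adjK !mulmxA.
  by rewrite adjM adjK !mulmxA.
by rewrite mulmxA -colE => /matrixP/(_ i 0); rewrite !mxE.
Qed.

Definition qidx m n (p : 'I_m * 'I_n) : 'I_(m * n) :=
  cast_ord (mxvec_cast m n) (enum_rank p).

Lemma qidxK m n : cancel (@qidx m n) (@pidx m n).
Proof. by move=> p; rewrite /pidx /qidx cast_ordK enum_rankK. Qed.

Lemma pidxK m n : cancel (@pidx m n) (@qidx m n).
Proof. by move=> k; rewrite /pidx /qidx enum_valK cast_ordKV. Qed.

Lemma sum_pidx m n (f : 'I_m -> 'I_n -> algC) :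
  \sum_(l < m * n) f (pidx l).1 (pidx l).2 = \sum_a \sum_b f a b.
Proof.
rewrite pair_big /= (reindex (@qidx m n)) /=; last first.
  by exists (@pidx m n) => x _; [apply: qidxK | apply: pidxK].
by apply: eq_bigr => p _; rewrite qidxK.
Qed.

Definition vec n (X : 'M[algC]_n) : 'cV[algC]_(n * n) := kron X 1%:M *m Phi n.

Lemma vecE n (X : 'M[algC]_n) k : vec X k 0 = X (pidx k).1 (pidx k).2.
Proof.
rewrite /vec mxE; under eq_bigr => l _ do rewrite /kron /Phi !mxE.
set i := (pidx k).1; set j := (pidx k).2.
rewrite (sum_pidx (fun a b => X i a * (j == b)%:R * (if a == b then 1 else 0))).
have diag a : \sum_b X i a * (j == b)%:R * (if a == b then 1 else 0) = (a == j)%:R * X i a.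
  rewrite (bigD1 j) //= big1 => [|b /negPf nbj]; last by rewrite eq_sym nbj mulr0 mul0r.
  by rewrite eqxx mulr1 addr0; case: eqP; rewrite ?mulr1 ?mulr0 ?mul1r ?mul0r.
under eq_bigr => a _ do rewrite diag.
by rewrite (bigD1 j) //= big1 => [|a /negPf ->]; rewrite ?eqxx ?mul1r ?addr0 ?mul0r.
Qed.

Lemma vec_eq0 n (X : 'M[algC]_n) : (vec X == 0) = (X == 0).
Proof.
apply/eqP/eqP => [vecX0 | ->]; apply/matrixP.
  by move=> a b; move/matrixP/(_ (qidx (a, b)) 0): vecX0; rewrite vecE qidxK !mxE.
by move=> k j; rewrite (ord1 j) vecE !mxE.
Qed.

Lemma kron_vec n (A B X : 'M[algC]_n) : kron A B *m vec X = vec (A *m X *m B^T).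
Proof.
apply/matrixP => k j; rewrite (ord1 j) vecE mxE.
under eq_bigr => l _ do rewrite vecE /kron mxE.
rewrite (sum_pidx (fun a b => A (pidx k).1 a * B (pidx k).2 b * X a b)).
rewrite mxE; under [RHS]eq_bigr => b _ do rewrite !mxE mulr_suml.
rewrite exchange_big /=; apply: eq_bigr => a _; apply: eq_bigr => b _.
by ring.
Qed.

Lemma matrep_vec n (L : superop n) X : matrep L *m vec X = vec (so_app L X).
Proof.
rewrite /matrep /so_app mulmx_suml; under eq_bigr => E _ do rewrite kron_vec.
apply/matrixP => k j; rewrite (ord1 j) summxE vecE summxE.
by apply: eq_bigr => E _; rewrite vecE.
Qed.

Lemma mxpow_matrep_vec n (L : superop n) k X :
  mxpow (matrep L) k *m vec X = vec (so_app (so_pow L k) X).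
Proof.
elim: k => [|k IHk]; first by rewrite mul1mx so_app_id.
by rewrite /= -mulmxA IHk matrep_vec so_app_comp.
Qed.

Lemma so_app_eq0_kspan n (L : superop n) rho :
  psd rho -> so_app L rho = 0 <-> (kspan L rho^T <= (0 : 'M_n))%MS.
Proof.
move=> psd_rho; rewrite so_app_eq0P //; split => [EL0 | sL0 E EL].
  by apply/kspan_subP => E EL; rewrite -trmx_mul EL0 // trmx0.
apply/eqP; rewrite -trmx_eq0 trmx_mul -submx0.
exact: submx_trans (kspan_sup _ EL) sL0.
Qed.

Section ConcurrentProgram.
Variables (d m : nat) (Es : 'I_m -> superop d) (M1 : 'M[algC]_d).

Local Notation F_ := (Fk Es M1).
Local Notation Fall := (so_sum [seq Fk Es M1 k | k <- enum 'I_m]).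
Local Notation G := (Gop Es M1).
Local Notation Sigma := (sumFprime Es M1).

(* Kraus operators of F_{w_n} o ... o F_{w_1}, the run of the word w = w_1 ... w_n *)
Fixpoint word (w : seq 'I_m) : superop d :=
  if w is k :: w' then so_comp (word w') (F_ k) else so_id d.

Definition segment (s : nat -> 'I_m) N L : seq 'I_m := [seq s i | i <- iota N L].

Lemma segmentD s N a b : segment s N (a + b) = segment s N a ++ segment s (N + a) b.
Proof. by rewrite /segment iotaD map_cat. Qed.

Lemma segmentS s N n : segment s N n.+1 = rcons (segment s N n) (s (N + n)%N).
Proof. by rewrite -cats1 -addn1 segmentD. Qed.

Lemma so_app_word_cat w1 w2 X :
  so_app (word (w1 ++ w2)) X = so_app (word w2) (so_app (word w1) X).
Proof. by elim: w1 X => [|k w1 IHw] X /=; rewrite ?so_app_id // !so_app_comp IHw. Qed.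

Lemma path_app_segment s n rho :
  path_app Es M1 s n rho = so_app (word (segment s 0 n)) rho.
Proof.
elim: n => [|n IHn]; first by rewrite /= so_app_id.
by rewrite segmentS -cats1 so_app_word_cat -IHn /= so_app_comp so_app_id.
Qed.

Lemma kspan_word_cat w1 w2 X :
  (kspan (word (w1 ++ w2)) X :=: kspan (word w2) (kspan (word w1) X))%MS.
Proof.
elim: w1 X => [|k w1 IHw] X /=; first exact/kspan_eqmx/eqmx_sym/kspan1.
apply: eqmx_trans (kspan_comp _ _ _) _; apply: eqmx_trans (IHw _) _.
exact/kspan_eqmx/eqmx_sym/kspan_comp.
Qed.

Lemma kspan_word1 k X : (kspan (word [:: k]) X :=: kspan (F_ k) X)%MS.
Proof. exact: eqmx_trans (kspan_comp _ _ _) (kspan1 _). Qed.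

Lemma Fk_sub_Fall k : {subset F_ k <= Fall}.
Proof. by move=> E Ek; apply/flattenP; exists (F_ k); rewrite ?map_f ?mem_enum. Qed.

Lemma Fprime_sub_Sigma p : {subset Fprime Es M1 p <= Sigma}.
Proof. by move=> E Ep; apply/flattenP; exists (Fprime Es M1 p); rewrite ?map_f ?mem_enum. Qed.

Lemma kspan_word_iter w Y : (kspan (word w) Y <= iter (size w) (kspan Fall) Y)%MS.
Proof.
elim: w Y => [|k w IHw] Y; first by rewrite /= kspan1.
rewrite [word _]/= kspan_comp [size _]/= iterSr; apply: submx_trans (IHw _) _.
exact/kspan_iter_mono/kspan_subset/Fk_sub_Fall.
Qed.

Lemma kspan_word_G w Y : (kspan (word w) Y <= kspan G Y)%MS.
Proof.
apply: submx_trans (kspan_word_iter _ _) _.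
apply: submx_trans (kspan_iter_sub_first_iterates _ _ _) _.
apply/sumsmx_subP => i _; rewrite -kspan_pow; apply: kspan_subset => E Ei.
by apply/flattenP; exists (so_pow Fall i); rewrite // map_f // mem_iota ltn_ord.
Qed.

(* Along a fair path, starting from a position holding k, some segment is dominated by
   F'_(k q) = F_(q_last) o G o ... o G o F_k: wait for each later letter of q in turn,
   letting G absorb the letters in between. *)
Lemma fair_segment_block s : fair s -> forall q k N, s N = k ->
  exists L, forall Y,
    (kspan (word (segment s N L.+1)) Y <= kspan (Fprime_seq Es M1 (k :: q)) Y)%MS.
Proof.
move=> fair_s; elim=> [|k' q IHq] k N sNk.
  by exists 0%N => Y; rewrite /segment /= sNk kspan_word1.
have [N' [ltNN' sN'k']] := fair_s k' N.+1; have [L IHL] := IHq k' N' sN'k'.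
exists (N' - N + L)%N => Y.
have -> : (N' - N + L).+1 = (1 + (N' - N.+1) + L.+1)%N by lia.
rewrite !segmentD (_ : N + (1 + (N' - N.+1)) = N')%N; last by lia.
rewrite kspan_word_cat (_ : segment s N 1 = [:: k]); last by rewrite /segment /= sNk.
have -> : Fprime_seq Es M1 [:: k, k' & q] =
  so_comp (Fprime_seq Es M1 (k' :: q)) (so_comp G (F_ k)) by [].
apply: submx_trans (IHL _) _; rewrite kspan_comp; apply: kspan_mono.
rewrite kspan_word_cat kspan_comp; apply: submx_trans (kspan_word_G _ _) (kspan_mono _ _).
by rewrite kspan_word1.
Qed.

(* Every fair path dominates, on some prefix, each power of Sigma: the next block is
   dominated by F'_p for a permutation p starting with the current letter. *)
Lemma fair_prefix_dominated s : fair s -> forall S t,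
  exists n, (kspan (word (segment s 0 n)) S <= iter t (kspan Sigma) S)%MS.
Proof.
move=> fair_s S; elim=> [|t [n IHn]]; first by exists 0%N; rewrite /= kspan1.
have [h [tl enumE]] : exists h tl, enum 'I_m = h :: tl.
  by case: (enum 'I_m) (mem_enum predT (s n)) => [|h tl] //; exists h, tl.
pose p := tperm h (s n).
have [L blockL] := fair_segment_block fair_s [seq p i | i <- tl] (erefl (s n)).
exists (n + L.+1)%N; rewrite segmentD add0n kspan_word_cat iterS.
apply: submx_trans (blockL _) _.
have -> : Fprime_seq Es M1 (s n :: [seq p i | i <- tl]) = Fprime Es M1 p.
  by rewrite /Fprime enumE /= tpermL.
exact: submx_trans (kspan_subset _ (@Fprime_sub_Sigma p)) (kspan_mono _ IHn).
Qed.

Lemma nilpotent_terminates rho : psd rho ->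
  (iter d (kspan Sigma) rho^T <= (0 : 'M_d))%MS -> terminates_in Es M1 rho (@fair m).
Proof.
move=> psd_rho nil s fair_s; have [n dom] := fair_prefix_dominated fair_s rho^T d.
exists n.+1; split => //; rewrite path_app_segment (so_app_eq0_kspan _ psd_rho).
rewrite segmentS -cats1 kspan_word_cat kspan_word1.
exact: submx_trans (kspan_mono _ (submx_trans dom nil)) (kspan0 _).
Qed.

Definition alive (Y : 'M[algC]_d) : bool := iter d (kspan Sigma) Y != 0.

Lemma alive_iter Y t : alive Y -> iter t (kspan Sigma) Y != 0.
Proof. by apply: contra => /eqP /kspan_iter_nilpotent ->. Qed.

Lemma alive_mono Y Z : (Y <= Z)%MS -> alive Y -> alive Z.
Proof.
move=> sYZ; apply: contra => /eqP Z0; rewrite -submx0 -Z0.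
exact: kspan_iter_mono.
Qed.

Lemma alive_kspan_neq0 L Y : alive (kspan L Y) -> Y != 0.
Proof.
apply: contraTneq => ->; rewrite negbK -submx0.
exact: submx_trans (kspan_iter_mono _ _ (kspan0 _)) (kspan_iter0 _ _).
Qed.

Lemma alive_step Y : alive Y -> alive (kspan Sigma Y).
Proof. by move=> Y_alive; rewrite /alive -iterSr alive_iter. Qed.

Lemma alive_pick L Y : alive (kspan L Y) -> exists2 E, E \in L & alive (Y *m E^T).
Proof.
move=> LY_alive; have [/hasP [E EL E_alive] | /hasPn dead] :=
  boolP (has (fun E => alive (Y *m E^T)) L); first by exists E.
case/negP: LY_alive; rewrite -submx0 [kspan L Y]/kspan.
apply: submx_trans (kspan_iter_sums _ _ _ _ _) _; apply/seq_sumsmx_subP => E EL.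
by have := dead E EL; rewrite negbK submx0.
Qed.

Lemma word_cat_mem w1 w2 A B :
  A \in word w2 -> B \in word w1 -> A *m B \in word (w1 ++ w2).
Proof.
elim: w1 B => [|k w1 IHw] B Aw2 /=; first by rewrite inE => /eqP ->; rewrite mulmx1.
case/allpairsP => [[C D] [/= Cw1 Dk ->]]; rewrite mulmxA.
by apply/allpairsP; exists (A *m C, D); split => //; apply: IHw.
Qed.

Lemma Fk_word k E : E \in F_ k -> E \in word [:: k].
Proof. by move=> Ek; apply/allpairsP; exists (1%:M, E); rewrite mem_head mul1mx. Qed.

Lemma G_word E : E \in G -> exists w, E \in word w.
Proof.
case/flattenP => _ /mapP [i _ ->]; elim: i E => [|i IHi] E /=; first by exists [::].
case/allpairsP => [[A B] [/= /flattenP [_ /mapP [k _ ->] Ak] /IHi [w Bw] ->]].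
by exists (w ++ [:: k]); apply: word_cat_mem => //; apply: Fk_word.
Qed.

Lemma Fprime_word q k E : E \in Fprime_seq Es M1 (k :: q) ->
  exists2 w, E \in word w & {subset k :: q <= w}.
Proof.
elim: q k E => [|k' q IHq] k E; first by exists [:: k]; rewrite ?Fk_word.
change (E \in so_comp (Fprime_seq Es M1 (k' :: q)) (so_comp G (F_ k)) ->
  exists2 w, E \in word w & {subset [:: k, k' & q] <= w}).
case/allpairsP => [[A B] [/= /IHq [w1 Aw1 sw1] /allpairsP [[C D] [/= CG Dk ->]] ->]].
have [w2 Cw2] := G_word CG; exists ((k :: w2) ++ w1).
  by apply: word_cat_mem => //; apply: (@word_cat_mem [:: k]); rewrite ?Fk_word.
move=> x; rewrite in_cons => /predU1P [->|xq]; first by rewrite mem_head.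
by rewrite mem_cat sw1 ?orbT.
Qed.

Lemma Sigma_word E : E \in Sigma -> exists2 w, E \in word w & forall k, k \in w.
Proof.
case/flattenP => _ /mapP [p _ ->]; rewrite /Fprime.
case enumE: (enum 'I_m) => [|h tl] /=.
  by exists [::] => // k; have := mem_enum predT k; rewrite enumE.
case/Fprime_word => w Ew sw; exists w => // k; apply: sw.
by rewrite -[k](permKV p) -map_cons -enumE map_f ?mem_enum.
Qed.

Lemma alive_word_ex Y : exists w : seq 'I_m,
  alive Y ==> [forall k, k \in w] && alive (kspan (word w) Y).
Proof.
have [Y_alive|] := boolP (alive Y); last by exists [::].
have [E ESigma E_alive] := alive_pick (alive_step Y_alive).
have [w Ew all_w] := Sigma_word ESigma; exists w.
apply/andP; split; first exact/forallP.
by apply: alive_mono E_alive; apply: kspan_sup.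
Qed.

Definition next_word Y : seq 'I_m := xchoose (alive_word_ex Y).

Lemma next_wordP Y : alive Y ->
  (forall k, k \in next_word Y) /\ alive (kspan (word (next_word Y)) Y).
Proof.
by move=> Y_alive; have /implyP/(_ Y_alive)/andP [/forallP] := xchooseP (alive_word_ex Y).
Qed.

(* A fair path never terminating from an alive support: a machine whose configuration is
   the current support and the rest of the word being read; an exhausted word is replaced
   by [next_word] of the current support, so every letter keeps recurring. *)
Section PersistentPath.
Variables (S0 : 'M[algC]_d) (k0 : 'I_m).
Hypothesis S0_alive : alive S0.

Definition pending (c : 'M[algC]_d * seq 'I_m) : seq 'I_m :=
  if c.2 is [::] then next_word c.1 else c.2.

Fixpoint run n : 'M[algC]_d * seq 'I_m :=
  if n is n'.+1 then
    let c := run n' in (kspan (F_ (head k0 (pending c))) c.1, behead (pending c))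
  else (S0, [::]).

Definition sched n : 'I_m := head k0 (pending (run n)).

Lemma pending_cons c : c.2 != [::] -> pending c = c.2.
Proof. by case: c => Y []. Qed.

Lemma pending_alive c : alive (kspan (word c.2) c.1) ->
  pending c != [::] /\ alive (kspan (word (pending c)) c.1).
Proof.
case: c => Y [|k r] //= Y_alive.
have [all_next next_alive] : (forall k, k \in next_word Y) /\ alive (kspan (word (next_word Y)) Y).
  by apply: next_wordP; apply: alive_mono Y_alive; rewrite kspan1.
split => //; apply/eqP; rewrite /pending /= => next_nil.
by have := all_next k0; rewrite next_nil.
Qed.

Lemma run_alive n : alive (kspan (word (run n).2) (run n).1).
Proof.
elim: n => [|n IHn]; first by apply: alive_mono S0_alive; rewrite /= kspan1.
have [] := pending_alive IHn; rewrite /=; case: (pending (run n)) => //= k r _.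
by apply: alive_mono; rewrite kspan_comp.
Qed.

Lemma run_sub_prefix n : ((run n).1 <= kspan (word (segment sched 0 n)) S0)%MS.
Proof.
elim: n => [|n IHn]; first by rewrite /= kspan1.
rewrite segmentS -cats1 kspan_word_cat kspan_word1 add0n.
exact: kspan_mono IHn.
Qed.

Lemma run_reads n i : (i < size (pending (run n)))%N ->
  pending (run (n + i)) = drop i (pending (run n)).
Proof.
elim: i => [|i IHi] lt_i; first by rewrite addn0 drop0.
have read : (run (n + i).+1).2 = drop i.+1 (pending (run n)).
  by rewrite /= IHi ?(ltnW lt_i) // -drop1 drop_drop add1n.
by rewrite addnS pending_cons read // -size_eq0 size_drop subn_eq0 -ltnNge.
Qed.

(* every letter recurs: each exhausted word is followed by one containing all letters *)
Lemma sched_fair : fair sched.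
Proof.
move=> k N; set w := pending (run N).
have w_gt0 : (0 < size w)%N by have [] := pending_alive (run_alive N); rewrite lt0n size_eq0.
pose N' := (N + size w)%N.
have exhausted : (run N').2 = [::].
  rewrite /N' -(prednK w_gt0) addnS /= run_reads ?prednK //.
  by rewrite -drop1 drop_drop add1n prednK ?drop_size.
have [all_next _] : (forall k, k \in next_word (run N').1) /\
    alive (kspan (word (next_word (run N').1)) (run N').1).
  apply: next_wordP; have := run_alive N'; rewrite exhausted.
  by apply: alive_mono; rewrite /= kspan1.
have freshE : pending (run N') = next_word (run N').1 by rewrite /pending exhausted.
exists (N' + index k (pending (run N')))%N; split; first by rewrite /N' -addnA leq_addr.
rewrite /sched run_reads; last by rewrite index_mem freshE all_next.
by rewrite -nth0 nth_drop addn0 nth_index // freshE all_next.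
Qed.

Lemma sched_prefix_alive n : ~~ (kspan (word (segment sched 0 n)) S0 <= (0 : 'M_d))%MS.
Proof.
apply: contraNN (alive_kspan_neq0 (run_alive n)) => prefix0.
by rewrite -submx0; apply: submx_trans (run_sub_prefix n) prefix0.
Qed.

End PersistentPath.

(* Conversely, if Sigma^d does not kill the support of rho, the machine above produces a
   fair path along which the program never terminates. *)
Lemma terminates_nilpotent rho : (0 < m)%N -> psd rho ->
  terminates_in Es M1 rho (@fair m) -> (iter d (kspan Sigma) rho^T <= (0 : 'M_d))%MS.
Proof.
move=> m_gt0 psd_rho term; rewrite submx0; apply: contraT => rho_alive.
have [n [_]] := term _ (sched_fair (Ordinal m_gt0) (rho_alive : alive rho^T)).
rewrite path_app_segment => /(so_app_eq0_kspan _ psd_rho).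
by move=> prefix0; move: (sched_prefix_alive (Ordinal m_gt0) rho_alive n); rewrite prefix0.
Qed.

Lemma fair_termination_iff rho : (0 < m)%N -> psd rho ->
  terminates_in Es M1 rho (@fair m) <-> (iter d (kspan Sigma) rho^T <= (0 : 'M_d))%MS.
Proof.
move=> m_gt0 psd_rho; split; [exact: terminates_nilpotent | exact: nilpotent_terminates].
Qed.

End ConcurrentProgram.

Theorem mainTheorem8 (d m : nat) (Es : 'I_m -> superop d) (M0 M1 : 'M[algC]_d)
  (rho0 : 'M[algC]_d) :
  (0 < d)%N -> (0 < m)%N ->
  (forall k, trace_preserving (Es k)) ->
  adj M0 *m M0 + adj M1 *m M1 = 1%:M ->
  density rho0 ->
  (terminates_in Es M1 rho0 (@fair m) <->
     mxpow (matrep (sumFprime Es M1)) d *m (kron rho0 (1%:M : 'M[algC]_d) *m Phi d) = 0)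
  /\
  (terminates_in Es M1 rho0 (@fair m) <->
     so_app (so_pow (sumFprime Es M1) d) rho0 = 0).
Proof.
move=> _ m_gt0 _ _ [psd_rho0 _]; set Sigma := sumFprime Es M1.
have so_criterion : terminates_in Es M1 rho0 (@fair m) <-> so_app (so_pow Sigma d) rho0 = 0.
  by rewrite fair_termination_iff // (so_app_eq0_kspan _ psd_rho0) kspan_pow.
(* the matrix criterion is the vectorised super-operator criterion *)
have mx_criterion : mxpow (matrep Sigma) d *m (kron rho0 1%:M *m Phi d) = 0 <->
    so_app (so_pow Sigma d) rho0 = 0.
  rewrite -/(vec rho0) mxpow_matrep_vec.
  by split => [/eqP | ->]; [rewrite vec_eq0 => /eqP | apply/eqP; rewrite vec_eq0].
by split; [apply: iff_trans so_criterion (iff_sym mx_criterion) | exact: so_criterion].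
Qed.
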